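(* Let $1\le i\le n-1$ and $m\ge1$ be an integer, with the convention that $X^{(k)}=0$ for $k<0$. Then in ${\boldsymbol U}_{v}(\mathfrak q_n)$ (in fact in ${\boldsymbol U}_{v,\mathcal Z}$): \begin{align*} (1)\ &\mathsf E_{\bar i}\mathsf F_i^{(m)}=\mathsf F_i^{(m)}\mathsf E_{\bar i}-v^{1-m}\mathsf F_i^{(m-1)}\mathsf K_i\mathsf K_{\overline{i+1}}+v^{m-1}\mathsf F_i^{(m-1)}\mathsf K_{\bar i}\mathsf K_{i+1}-\mathsf F_i^{(m-2)}\mathsf K_i\mathsf K_{i+1}\mathsf F_{\bar i};\\ (2)\ &\mathsf E_i^{(m)}\mathsf F_{\bar i}=\mathsf F_{\bar i}\mathsf E_i^{(m)}+v^{m-1}\mathsf E_i^{(m-1)}\mathsf K_{\bar i}\mathsf K_{i+1}^{-1}-v^{-m+1}\mathsf E_i^{(m-1)}\mathsf K_{\overline{i+1}}\mathsf K_i^{-1}+\mathsf E_i^{(m-2)}\mathsf E_{\bar i}\mathsf K_{i+1}^{-1}\mathsf K_i^{-1};\\ (3)\ &\mathsf E_{\bar i}\mathsf E_{i+1}^{(m)}=v^m\mathsf E_{i+1}^{(m)}\mathsf E_{\bar i}+\mathsf E_{i+1}^{(m-1)}(\mathsf E_i\mathsf E_{\overline{i+1}}-v\mathsf E_{\overline{i+1}}\mathsf E_i)\quad(\text{here } i\le n-2). \end{align*}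
   Context: Let $v$ be an indeterminate. The quantum queer superalgebra ${\boldsymbol U}_{v}(\mathfrak q_n)$ is the associative superalgebra over $\mathbb Q(v)$ generated by even generators $\mathsf K_i,\mathsf K_i^{-1}$ ($1\le i\le n$), $\mathsf E_j,\mathsf F_j$ ($1\le j\le n-1$) and odd generators $\mathsf K_{\bar i}$ ($1\le i\le n$), $\mathsf E_{\bar j},\mathsf F_{\bar j}$ ($1\le j\le n-1$), subject to the following relations (indices are taken only where they make sense), where $(\epsilon_i,\alpha_j)=\delta_{i,j}-\delta_{i,j+1}$: (QQ1) $\mathsf K_i\mathsf K_i^{-1}=\mathsf K_i^{-1}\mathsf K_i=1$, $\mathsf K_i\mathsf K_j=\mathsf K_j\mathsf K_i$, $\mathsf K_i\mathsf K_{\bar j}=\mathsf K_{\bar j}\mathsf K_i$, $\mathsf K_{\bar i}\mathsf K_{\bar j}+\mathsf K_{\bar j}\mathsf K_{\bar i}=2\delta_{i,j}\frac{\mathsf K_i^2-\mathsf K_i^{-2}}{v^2-v^{-2}}$. (QQ2) $\mathsf K_i\mathsf E_j=v^{(\epsilon_i,\alpha_j)}\mathsf E_j\mathsf K_i$, $\mathsf K_i\mathsf E_{\bar j}=v^{(\epsilon_i,\alpha_j)}\mathsf E_{\bar j}\mathsf K_i$, $\mathsf K_i\mathsf F_j=v^{-(\epsilon_i,\alpha_j)}\mathsf F_j\mathsf K_i$, $\mathsf K_i\mathsf F_{\bar j}=v^{-(\epsilon_i,\alpha_j)}\mathsf F_{\bar j}\mathsf K_i$. (QQ3) $\mathsf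 K_{\bar i}\mathsf E_i-v\mathsf E_i\mathsf K_{\bar i}=\mathsf E_{\bar i}\mathsf K_i^{-1}$, $v\mathsf K_{\bar i}\mathsf E_{i-1}-\mathsf E_{i-1}\mathsf K_{\bar i}=-\mathsf K_i^{-1}\mathsf E_{\overline{i-1}}$, $\mathsf K_{\bar i}\mathsf F_i-v\mathsf F_i\mathsf K_{\bar i}=-\mathsf F_{\bar i}\mathsf K_i$, $v\mathsf K_{\bar i}\mathsf F_{i-1}-\mathsf F_{i-1}\mathsf K_{\bar i}=\mathsf K_i\mathsf F_{\overline{i-1}}$, $\mathsf K_{\bar i}\mathsf E_{\bar i}+v\mathsf E_{\bar i}\mathsf K_{\bar i}=\mathsf E_i\mathsf K_i^{-1}$, $v\mathsf K_{\bar i}\mathsf E_{\overline{i-1}}+\mathsf E_{\overline{i-1}}\mathsf K_{\bar i}=\mathsf K_i^{-1}\mathsf E_{i-1}$, $\mathsf K_{\bar i}\mathsf F_{\bar i}+v\mathsf F_{\bar i}\mathsf K_{\bar i}=\mathsf F_i\mathsf K_i$, $v\mathsf K_{\bar i}\mathsf F_{\overline{i-1}}+\mathsf F_{\overline{i-1}}\mathsf K_{\bar i}=\mathsf K_i\mathsf F_{i-1}$, and for $j\ne i,i-1$: $\mathsf K_{\bar i}\mathsf E_j=\mathsf E_j\mathsf K_{\bar i}$, $\mathsf K_{\bar i}\mathsf F_j=\mathsf F_j\mathsf K_{\bar i}$, $\mathsf K_{\bar i}\mathsf E_{\bar j}=-\mathsf E_{\bar j}\mathsf K_{\bar i}$,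 $\mathsf K_{\bar i}\mathsf F_{\bar j}=-\mathsf F_{\bar j}\mathsf K_{\bar i}$. (QQ4) $\mathsf E_i\mathsf F_j-\mathsf F_j\mathsf E_i=\delta_{i,j}\frac{\mathsf K_i\mathsf K_{i+1}^{-1}-\mathsf K_i^{-1}\mathsf K_{i+1}}{v-v^{-1}}$, $\mathsf E_{\bar i}\mathsf F_{\bar j}+\mathsf F_{\bar j}\mathsf E_{\bar i}=\delta_{i,j}\big(\frac{\mathsf K_i\mathsf K_{i+1}-\mathsf K_i^{-1}\mathsf K_{i+1}^{-1}}{v-v^{-1}}+(v-v^{-1})\mathsf K_{\bar i}\mathsf K_{\overline{i+1}}\big)$, $\mathsf E_i\mathsf F_{\bar j}-\mathsf F_{\bar j}\mathsf E_i=\delta_{i,j}(\mathsf K_{i+1}^{-1}\mathsf K_{\bar i}-\mathsf K_{\overline{i+1}}\mathsf K_i^{-1})$, $\mathsf E_{\bar i}\mathsf F_j-\mathsf F_j\mathsf E_{\bar i}=\delta_{i,j}(\mathsf K_{i+1}\mathsf K_{\bar i}-\mathsf K_{\overline{i+1}}\mathsf K_i)$. (QQ5) $\mathsf E_{\bar i}^2=-\frac{v-v^{-1}}{v+v^{-1}}\mathsf E_i^2$, $\mathsf F_{\bar i}^2=\frac{v-v^{-1}}{v+v^{-1}}\mathsf F_i^2$; for $|i-j|\ne1$: $\mathsf E_i\mathsf E_{\bar j}=\mathsf E_{\bar j}\mathsf E_i$, $\mathsf F_i\mathsf F_{\bar j}=\mathsf F_{\bar j}\mathsf F_i$; for $|i-j|>1$: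 $\mathsf E_i\mathsf E_j=\mathsf E_j\mathsf E_i$, $\mathsf F_i\mathsf F_j=\mathsf F_j\mathsf F_i$, $\mathsf E_{\bar i}\mathsf E_{\bar j}=-\mathsf E_{\bar j}\mathsf E_{\bar i}$, $\mathsf F_{\bar i}\mathsf F_{\bar j}=-\mathsf F_{\bar j}\mathsf F_{\bar i}$; $\mathsf E_i\mathsf E_{i+1}-v\mathsf E_{i+1}\mathsf E_i=\mathsf E_{\bar i}\mathsf E_{\overline{i+1}}+v\mathsf E_{\overline{i+1}}\mathsf E_{\bar i}$, $\mathsf E_i\mathsf E_{\overline{i+1}}-v\mathsf E_{\overline{i+1}}\mathsf E_i=\mathsf E_{\bar i}\mathsf E_{i+1}-v\mathsf E_{i+1}\mathsf E_{\bar i}$, $\mathsf F_i\mathsf F_{i+1}-v\mathsf F_{i+1}\mathsf F_i=-(\mathsf F_{\bar i}\mathsf F_{\overline{i+1}}+v\mathsf F_{\overline{i+1}}\mathsf F_{\bar i})$, $\mathsf F_i\mathsf F_{\overline{i+1}}-v\mathsf F_{\overline{i+1}}\mathsf F_i=\mathsf F_{\bar i}\mathsf F_{i+1}-v\mathsf F_{i+1}\mathsf F_{\bar i}$. (QQ6) for $|i-j|=1$: $\mathsf E_i^2X-(v+v^{-1})\mathsf E_iX\mathsf E_i+X\mathsf E_i^2=0$ for $X\in\{\mathsf E_j,\mathsf E_{\bar j}\}$ and $\mathsf F_i^2Y-(v+v^{-1})\mathsf F_iY\mathsf F_i+Y\mathsf F_i^2=0$ for $Y\in\{\mathsf F_j,\mathsf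 F_{\bar j}\}$. Notation: $[m]_v=\frac{v^m-v^{-m}}{v-v^{-1}}$, $[m]_v^!=[m]_v[m-1]_v\cdots[1]_v$, $[0]_v^!=1$, and $X^{(m)}=X^m/[m]_v^!$ for $m\ge0$. ${\boldsymbol U}_{v,\mathcal Z}$ denotes the $\mathbb Z[v,v^{-1}]$-subsuperalgebra of ${\boldsymbol U}_{v}(\mathfrak q_n)$ generated by $\mathsf K_i^{\pm1}$, $\prod_{s=1}^t\frac{\mathsf K_iv^{1-s}-\mathsf K_i^{-1}v^{s-1}}{v^s-v^{-s}}$, $\mathsf K_{\bar i}$, $\mathsf E_j^{(m)},\mathsf F_j^{(m)},\mathsf E_{\bar j},\mathsf F_{\bar j}$. *)

From HB Require Import structures.
From mathcomp Require Import all_boot all_order all_algebra.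
From mathcomp Require Import fraction.
Set Implicit Arguments. Unset Strict Implicit. Unset Printing Implicit Defensive.
Import Order.TTheory GRing.Theory Num.Theory.
Local Open Scope ring_scope.

Definition Qv : fieldType := {fraction {poly rat}}.
Definition v : Qv := @FracField.tofrac _ ('X : {poly rat}).

Definition qint (m : nat) : Qv := (v ^+ m - v ^- m) / (v - v^-1).
Definition qfact (m : nat) : Qv := \prod_(1 <= k < m.+1) qint k.

Definition dpow (A : algType Qv) (x : A) (k : int) : A :=
  match k with
  | Posz n => (qfact n)^-1 *: x ^+ n
  | Negz _ => 0
  end.

(* (eps_i, alpha_j) = delta_{i,j} - delta_{i,j+1} *)
Definition epsal (i j : nat) : int := (i == j)%:Z - (i == j.+1)%:Z.

(* The defining relations (QQ1)-(QQ6) of U_v(q_n), for a family of elements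
   of an associative Q(v)-algebra A.  Indices are natural numbers:
   K_i, K_i^{-1} (= Km i), K_{bar i} (= Kb i) for 1 <= i <= n;
   E_j, F_j, E_{bar j} (= Eb j), F_{bar j} (= Fb j) for 1 <= j <= n-1. *)
Definition qq_rels (n : nat) (A : algType Qv)
  (Kp Km Kb E F Eb Fb : nat -> A) : Prop :=
  (forall i j, (1 <= i <= n)%N -> (1 <= j <= n)%N ->
     [/\ Kp i * Km i = 1, Km i * Kp i = 1, Kp i * Kp j = Kp j * Kp i,
         Kp i * Kb j = Kb j * Kp i &
         Kb i * Kb j + Kb j * Kb i =
           if i == j then (2 / (v ^+ 2 - v ^- 2)) *: (Kp i ^+ 2 - Km i ^+ 2)
           else 0]) /\
  (forall i j, (1 <= i <= n)%N -> (1 <= j <= n.-1)%N ->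
     [/\ Kp i * E j = v ^ (epsal i j) *: (E j * Kp i),
         Kp i * Eb j = v ^ (epsal i j) *: (Eb j * Kp i),
         Kp i * F j = v ^ (- epsal i j) *: (F j * Kp i) &
         Kp i * Fb j = v ^ (- epsal i j) *: (Fb j * Kp i)]) /\
  (forall i, (1 <= i <= n.-1)%N ->
     [/\ Kb i * E i - v *: (E i * Kb i) = Eb i * Km i,
         Kb i * F i - v *: (F i * Kb i) = - (Fb i * Kp i),
         Kb i * Eb i + v *: (Eb i * Kb i) = E i * Km i &
         Kb i * Fb i + v *: (Fb i * Kb i) = F i * Kp i]) /\
  (forall i, (2 <= i <= n)%N ->
     [/\ v *: (Kb i * E i.-1) - E i.-1 * Kb i = - (Km i * Eb i.-1),
         v *: (Kb i * F i.-1) - F i.-1 * Kb i = Kp i * Fb i.-1,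
         v *: (Kb i * Eb i.-1) + Eb i.-1 * Kb i = Km i * E i.-1 &
         v *: (Kb i * Fb i.-1) + Fb i.-1 * Kb i = Kp i * F i.-1]) /\
  (forall i j, (1 <= i <= n)%N -> (1 <= j <= n.-1)%N ->
     j != i -> j != i.-1 ->
     [/\ Kb i * E j = E j * Kb i, Kb i * F j = F j * Kb i,
         Kb i * Eb j = - (Eb j * Kb i) & Kb i * Fb j = - (Fb j * Kb i)]) /\
  (forall i j, (1 <= i <= n.-1)%N -> (1 <= j <= n.-1)%N ->
     [/\ E i * F j - F j * E i =
           (if i == j then (v - v^-1)^-1 *: (Kp i * Km i.+1 - Km i * Kp i.+1)
            else 0),
         Eb i * Fb j + Fb j * Eb i =
           (if i == j then (v - v^-1)^-1 *: (Kp i * Kp i.+1 - Km i * Km i.+1)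
                           + (v - v^-1) *: (Kb i * Kb i.+1)
            else 0),
         E i * Fb j - Fb j * E i =
           (if i == j then Km i.+1 * Kb i - Kb i.+1 * Km i else 0) &
         Eb i * F j - F j * Eb i =
           (if i == j then Kp i.+1 * Kb i - Kb i.+1 * Kp i else 0)]) /\
  (forall i, (1 <= i <= n.-1)%N ->
     Eb i ^+ 2 = - ((v - v^-1) / (v + v^-1)) *: E i ^+ 2 /\
     Fb i ^+ 2 = ((v - v^-1) / (v + v^-1)) *: F i ^+ 2) /\
  (forall i j, (1 <= i <= n.-1)%N -> (1 <= j <= n.-1)%N ->
     ~~ ((i == j.+1) || (j == i.+1)) ->
     E i * Eb j = Eb j * E i /\ F i * Fb j = Fb j * F i) /\
  (forall i j, (1 <= i <= n.-1)%N -> (1 <= j <= n.-1)%N ->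
     (i.+1 < j)%N || (j.+1 < i)%N ->
     [/\ E i * E j = E j * E i, F i * F j = F j * F i,
         Eb i * Eb j = - (Eb j * Eb i) & Fb i * Fb j = - (Fb j * Fb i)]) /\
  (forall i, (1 <= i)%N -> (i.+1 <= n.-1)%N ->
     [/\ E i * E i.+1 - v *: (E i.+1 * E i) = Eb i * Eb i.+1 + v *: (Eb i.+1 * Eb i),
         E i * Eb i.+1 - v *: (Eb i.+1 * E i) = Eb i * E i.+1 - v *: (E i.+1 * Eb i),
         F i * F i.+1 - v *: (F i.+1 * F i) = - (Fb i * Fb i.+1 + v *: (Fb i.+1 * Fb i)) &
         F i * Fb i.+1 - v *: (Fb i.+1 * F i) = Fb i * F i.+1 - v *: (F i.+1 * Fb i)]) /\
  (forall i j, (1 <= i <= n.-1)%N -> (1 <= j <= n.-1)%N ->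
     (i == j.+1) || (j == i.+1) ->
     (forall X, X = E j \/ X = Eb j ->
        E i ^+ 2 * X - (v + v^-1) *: (E i * X * E i) + X * E i ^+ 2 = 0) /\
     (forall Y, Y = F j \/ Y = Fb j ->
        F i ^+ 2 * Y - (v + v^-1) *: (F i * Y * F i) + Y * F i ^+ 2 = 0)).

From HB Require Import structures.
From mathcomp Require Import all_boot all_order all_algebra.
From mathcomp Require Import fraction ring zify.
Set Implicit Arguments. Unset Strict Implicit. Unset Printing Implicit Defensive.
Import Order.TTheory GRing.Theory Num.Theory.
Local Open Scope ring_scope.

(* Each identity moves an odd generator y past a power of x = F_i, E_i or E_(i+1).
   In (1) and (2), the commutator of y and x is psi - phi where psi x = v^2 x psi + v W
   and phi x = v^-2 x phi - v^-1 W with W commuting with x (for (1): psi = Kb_i K_(i+1),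
   phi = K_i Kb_(i+1), W = - K_i K_(i+1) Fb_i); induction on k shows that the
   commutator of y and x^(k+1) is [k+1] (v^k x^k psi - v^-k x^k phi + [k] x^(k-1) W),
   and dividing by [k+1]! gives the divided-power form.  In (3), the Serre relation
   says that Z = Eb_i E_(i+1) - v E_(i+1) Eb_i satisfies Z E_(i+1) = v^-1 E_(i+1) Z,
   whence Eb_i E_(i+1)^(k+1) = v^(k+1) E_(i+1)^(k+1) Eb_i + [k+1] E_(i+1)^k Z. *)

Section LinearCombination.
Variables (R : pzRingType) (V : lmodType R).

Definition comb3 (X Y Z : V) (a b c : R) : V := a *: X + b *: Y + c *: Z.

Lemma comb3D X Y Z a b c a' b' c' :
  comb3 X Y Z a b c + comb3 X Y Z a' b' c' = comb3 X Y Z (a + a') (b + b') (c + c').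
Proof. by rewrite /comb3 !scalerDl addrACA (addrACA (a *: X)). Qed.

Lemma comb3N X Y Z a b c : - comb3 X Y Z a b c = comb3 X Y Z (- a) (- b) (- c).
Proof. by rewrite /comb3 !scaleNr !opprD. Qed.

Lemma comb3Z X Y Z k a b c : k *: comb3 X Y Z a b c = comb3 X Y Z (k * a) (k * b) (k * c).
Proof. by rewrite /comb3 !scalerDr !scalerA. Qed.

Lemma comb3_basis (P : V -> V -> V -> Prop) X Y Z :
  P (comb3 X Y Z 1 0 0) (comb3 X Y Z 0 1 0) (comb3 X Y Z 0 0 1) -> P X Y Z.
Proof. by rewrite /comb3 !scale0r !scale1r !addr0 !add0r. Qed.
End LinearCombination.

(* [mulrA] is restricted to the algebra [A]: on scalars it would unfold [qnum q k]. *)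
Ltac expand_lin A :=
  do 2 rewrite ?(mulrDl, mulrDr, mulNr, mulrN, scalerDr, scalerN, opprD, opprK)
    -?(scalerAl, scalerAr) ?(scalerA, @mulrA A).

(* Reduces an equation between combinations of the atoms X, Y, Z under [+], [-]
   and [*:] to the three equations between their coefficients. *)
Ltac collect3 X Y Z :=
  let X' := fresh "X" in let Y' := fresh "Y" in let Z' := fresh "Z" in
  set X' := X; set Y' := Y; set Z' := Z; clearbody X' Y' Z';
  pattern X', Y', Z';
  match goal with |- ?P _ _ _ => apply: (comb3_basis (P := P)) end; cbv beta;
  rewrite ?(comb3N, comb3Z, comb3D); congr (comb3 _ _ _ _ _ _).

Section SkewCommutation.
Variables (K : fieldType) (A : algType K).

Definition qcomm (w : K) (a b : A) := a * b = w *: (b * a).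

Lemma qcommV w a a' b : a * a' = 1 -> a' * a = 1 -> w != 0 ->
  qcomm w a b -> qcomm w^-1 a' b.
Proof.
move=> aa' a'a w_neq0 ab; rewrite /qcomm.
have : a' * (a * b) * a' = b * a' by rewrite mulrA a'a mul1r.
rewrite ab -scalerAr -scalerAl -mulrA -(mulrA b) aa' mulr1 => <-.
by rewrite scalerA mulVf // scale1r.
Qed.

Lemma qcommMl w1 w2 a b c : qcomm w1 a c -> qcomm w2 b c -> qcomm (w1 * w2) (a * b) c.
Proof.
move=> ac bc; rewrite /qcomm -mulrA bc -scalerAr [a * (c * b)]mulrA ac.
by rewrite -scalerAl scalerA -mulrA [w2 * _]mulrC.
Qed.

Lemma qcomm_comm a b : qcomm 1 a b <-> a * b = b * a.
Proof. by rewrite /qcomm scale1r. Qed.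

Lemma comm_invl (a a' b : A) : a * a' = 1 -> a' * a = 1 -> a * b = b * a -> a' * b = b * a'.
Proof.
move=> aa' a'a /qcomm_comm ab; apply/qcomm_comm.
by rewrite -invr1; apply: qcommV aa' a'a (oner_neq0 _) ab.
Qed.
End SkewCommutation.

(* [qint k] is [qnum v k] by definition.  Scalar identities are proved for an
   arbitrary [q] because ring and field do not terminate on terms containing [v]. *)
Definition qnum (K : fieldType) (q : K) (k : nat) : K := (q ^+ k - q ^- k) / (q - q^-1).

Section QuantumNumbers.
Variables (K : fieldType) (q : K).
Hypotheses (q_neq0 : q != 0) (q2_neq1 : q ^+ 2 != 1).

Lemma qnum0 : qnum q 0 = 0.
Proof. by rewrite /qnum expr0 invr1 subrr mul0r. Qed.

Let q_subV_neq0 : q - q^-1 != 0.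
Proof.
apply: contra_neq q2_neq1 => /eqP; rewrite subr_eq0 => /eqP qV.
by rewrite expr2 {1}qV mulVf.
Qed.

Lemma qnum1 : qnum q 1 = 1.
Proof. by rewrite /qnum expr1 mulfV. Qed.

Let qq1_neq0 : q * q - 1 != 0.
Proof. by rewrite subr_eq0 -expr2. Qed.

Let qk_neq0 k : q ^+ k != 0.
Proof. exact: expf_neq0. Qed.

Lemma qnumS k : qnum q k.+1 = q ^+ k + q^-1 * qnum q k.
Proof. by rewrite /qnum exprS; field; rewrite q_neq0 qq1_neq0 qk_neq0. Qed.

Lemma qnumS_sym k : qnum q k.+1 = q ^- k + q * qnum q k.
Proof. by rewrite /qnum exprS; field; rewrite q_neq0 qq1_neq0 qk_neq0. Qed.

Lemma qnumSS k : qnum q k.+2 = q ^+ k.+1 + q ^- k.+1 + qnum q k.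
Proof. by rewrite qnumS qnumS_sym exprS; field; rewrite q_neq0 qk_neq0. Qed.

Lemma qnum_neq0 k : (forall j, (0 < j)%N -> q ^+ j != 1) -> qnum q k.+1 != 0.
Proof.
move=> q_not_root; rewrite /qnum mulf_neq0 ?invr_eq0 // subr_eq0.
have /q_not_root : (0 < k.+1 + k.+1)%N by [].
by apply: contra_neq => qk; rewrite exprD {1}qk mulVf ?expf_neq0.
Qed.
End QuantumNumbers.

Section PowerCommutator.
Variables (K : fieldType) (q : K) (A : algType K) (x psi phi W : A).
Hypotheses (q_neq0 : q != 0) (q2_neq1 : q ^+ 2 != 1).
Hypotheses (psi_x : psi * x = q ^+ 2 *: (x * psi) + q *: W)
           (phi_x : phi * x = q ^- 2 *: (x * phi) - q^-1 *: W)
           (W_x : W * x = x * W).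

(* At k = 0 the truncated [k.-1] is harmless: its coefficient is [qnum q 0 = 0]. *)
Lemma commutator_seqE (D : nat -> A) :
  D 0 = 0 -> (forall k, D k.+1 = D k * x + x ^+ k * (psi - phi)) ->
  forall k, D k.+1 = qnum q k.+1 *:
    (q ^+ k *: (x ^+ k * psi) - q ^- k *: (x ^+ k * phi) + qnum q k *: (x ^+ k.-1 * W)).
Proof.
move=> D0 DS; elim=> [|k IHk].
  by rewrite DS D0 mul0r add0r qnum0 scale0r addr0 qnum1 // !expr0 invr1 !scale1r !mul1r.
have psi_xk : x ^+ k * psi * x = q ^+ 2 *: (x ^+ k.+1 * psi) + q *: (x ^+ k * W).
  by rewrite -mulrA psi_x mulrDr -!scalerAr mulrA -exprSr.
have phi_xk : x ^+ k * phi * x = q ^- 2 *: (x ^+ k.+1 * phi) - q^-1 *: (x ^+ k * W).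
  by rewrite -mulrA phi_x mulrBr -!scalerAr mulrA -exprSr.
have W_xk : qnum q k *: (x ^+ k.-1 * W * x) = qnum q k *: (x ^+ k * W).
  by case: k {IHk psi_xk phi_xk} => [|k]; rewrite ?qnum0 ?scale0r // -mulrA W_x mulrA -exprSr.
rewrite DS IHk -[k.+1.-1]/k -scalerAl mulrDl -scalerAl W_xk; expand_lin A.
rewrite psi_xk phi_xk; expand_lin A.
have qk_neq0 : q ^+ k != 0 by rewrite expf_neq0.
collect3 (x ^+ k.+1 * psi) (x ^+ k.+1 * phi) (x ^+ k * W).
- by rewrite (qnumS_sym q_neq0 q2_neq1 k.+1) (exprS q k); field; rewrite q_neq0 qk_neq0.
- by rewrite (qnumS q_neq0 q2_neq1 k.+1) (exprS q k); field; rewrite q_neq0 qk_neq0.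
- by rewrite (qnumSS q_neq0 q2_neq1 k) (exprS q k); field; rewrite q_neq0 qk_neq0.
Qed.
End PowerCommutator.

Section SkewPower.
Variables (K : fieldType) (q : K) (A : algType K) (x y Z : A).
Hypotheses (q_neq0 : q != 0) (q2_neq1 : q ^+ 2 != 1).
Hypotheses (y_x : y * x = q *: (x * y) + Z) (Z_x : qcomm q^-1 Z x).

Lemma skew_powE k :
  y * x ^+ k.+1 = q ^+ k.+1 *: (x ^+ k.+1 * y) + qnum q k.+1 *: (x ^+ k * Z).
Proof.
elim: k => [|k IHk]; first by rewrite !expr1 expr0 mul1r qnum1 // scale1r.
rewrite exprSr mulrA IHk mulrDl -!scalerAl -!mulrA y_x Z_x; expand_lin A.
rewrite -!exprSr -addrA -scalerDl (qnumS q_neq0 q2_neq1 k.+1) (exprS q k.+1).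
by rewrite [q * _]mulrC [q^-1 * _]mulrC.
Qed.
End SkewPower.

Lemma serre_qcomm (K : fieldType) (q : K) (A : algType K) (x y : A) :
  q != 0 -> x ^+ 2 * y - (q + q^-1) *: (x * y * x) + y * x ^+ 2 = 0 ->
  qcomm q^-1 (y * x - q *: (x * y)) x.
Proof.
move=> q_neq0 serre; apply/eqP; rewrite -subr_eq0 -serre !expr2; apply/eqP.
expand_lin A; collect3 (x * x * y) (x * y * x) (y * x * x); field; exact: q_neq0.
Qed.

Lemma v_neq0 : v != 0.
Proof. by rewrite tofrac_eq0 polyX_eq0. Qed.

Lemma expv_neq1 k : (0 < k)%N -> v ^+ k != 1.
Proof.
move=> k_gt0; rewrite -tofracXn -tofrac1 tofrac_eq.
apply/eqP => /(congr1 (size : {poly rat} -> nat)).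
by rewrite size_polyXn size_poly1; case: k k_gt0.
Qed.

Lemma v2_neq1 : v ^+ 2 != 1.
Proof. exact: expv_neq1. Qed.

Lemma qintE k : qint k = qnum v k.
Proof. by []. Qed.

Lemma qint_neq0 k : qint k.+1 != 0.
Proof. exact: qnum_neq0 v_neq0 v2_neq1 k expv_neq1. Qed.

Lemma qint0 : qint 0 = 0.
Proof. exact: qnum0. Qed.

Lemma qfact0 : qfact 0 = 1.
Proof. by rewrite /qfact big_geq. Qed.

Lemma qfactS k : qfact k.+1 = qint k.+1 * qfact k.
Proof. by rewrite /qfact big_nat_recr //= mulrC. Qed.

Lemma qfactVS k : (qfact k.+1)^-1 * qint k.+1 = (qfact k)^-1.
Proof. by rewrite qfactS invfM mulrAC mulVf ?qint_neq0 // mul1r. Qed.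

Lemma dpow_nat (A : algType Qv) (x : A) (k : nat) : dpow x k = (qfact k)^-1 *: x ^+ k.
Proof. by []. Qed.

Section DividedPowers.
Variables (A : algType Qv) (x psi phi W : A).
Hypotheses (psi_x : psi * x = v ^+ 2 *: (x * psi) + v *: W)
           (phi_x : phi * x = v ^- 2 *: (x * phi) - v^-1 *: W)
           (W_x : W * x = x * W).

Lemma commutator_seq_dpowE (D : nat -> A) :
  D 0 = 0 -> (forall k, D k.+1 = D k * x + x ^+ k * (psi - phi)) ->
  forall m : nat, (qfact m)^-1 *: D m =
    v ^ (m%:Z - 1) *: (dpow x (m%:Z - 1) * psi)
    - v ^ (1 - m%:Z) *: (dpow x (m%:Z - 1) * phi) + dpow x (m%:Z - 2) * W.
Proof.
move=> D0 DS [|k].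
  by rewrite D0 scaler0 [dpow x _]/= [dpow x _]/= !mul0r !scaler0 subrr addr0.
have W_term : (qfact k)^-1 *: (qint k *: (x ^+ k.-1 * W)) = dpow x (k.+1%:Z - 2) * W.
  case: k => [|k]; first by rewrite qint0 !scale0r scaler0 mul0r.
  by rewrite scalerA qfactVS -addn2 PoszD addrK scalerAl.
rewrite (commutator_seqE v_neq0 v2_neq1 psi_x phi_x W_x D0 DS) -!qintE scalerA qfactVS.
have -> : k.+1%:Z - 1 = k by rewrite -addn1 PoszD addrK.
have -> : 1 - k.+1%:Z = - k%:Z by rewrite -opprB -addn1 PoszD addrK.
rewrite scalerDr W_term -exprnP -exprnN dpow_nat; congr (_ + _).
by rewrite -!scalerAl scalerBr !scalerA [v ^+ k * _]mulrC [v ^- k * _]mulrC.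
Qed.

Lemma mul_dpow_commutator (y : A) : y * x = x * y + (psi - phi) ->
  forall m : nat, y * dpow x m = dpow x m * y +
    (v ^ (m%:Z - 1) *: (dpow x (m%:Z - 1) * psi)
     - v ^ (1 - m%:Z) *: (dpow x (m%:Z - 1) * phi) + dpow x (m%:Z - 2) * W).
Proof.
move=> y_x m; pose D k := y * x ^+ k - x ^+ k * y.
have y_x_comm : psi - phi = y * x - x * y by rewrite y_x addrAC subrr add0r.
have D0 : D 0 = 0 by rewrite /D expr0 mulr1 mul1r subrr.
have DS k : D k.+1 = D k * x + x ^+ k * (psi - phi).
  by rewrite /D y_x_comm exprSr mulrBl mulrBr !mulrA addrA subrK.
rewrite -(commutator_seq_dpowE D0 DS) /D dpow_nat -scalerAr -scalerAl -scalerDr.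
by rewrite addrC subrK.
Qed.

Lemma dpow_mul_commutator (y : A) : x * y = y * x + (psi - phi) ->
  forall m : nat, dpow x m * y = y * dpow x m +
    (v ^ (m%:Z - 1) *: (dpow x (m%:Z - 1) * psi)
     - v ^ (1 - m%:Z) *: (dpow x (m%:Z - 1) * phi) + dpow x (m%:Z - 2) * W).
Proof.
move=> x_y m; pose D k := x ^+ k * y - y * x ^+ k.
have x_y_comm : psi - phi = x * y - y * x by rewrite x_y addrAC subrr add0r.
have D0 : D 0 = 0 by rewrite /D expr0 mulr1 mul1r subrr.
have DS k : D k.+1 = D k * x + x ^+ k * (psi - phi).
  by rewrite /D x_y_comm exprSr mulrBl mulrBr !mulrA [in RHS]addrC addrA subrK.
rewrite -(commutator_seq_dpowE D0 DS) /D dpow_nat -scalerAr -scalerAl -scalerDr.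
by rewrite addrC subrK.
Qed.
End DividedPowers.

Lemma mul_dpow_skew (A : algType Qv) (x y Z : A) :
  y * x = v *: (x * y) + Z -> qcomm v^-1 Z x ->
  forall m : nat, y * dpow x m = v ^ m%:Z *: (dpow x m * y) + dpow x (m%:Z - 1) * Z.
Proof.
move=> y_x Z_x [|k].
  by rewrite [dpow x _]/= qfact0 invr1 expr0 !scale1r mulr1 mul1r mul0r addr0.
have -> : k.+1%:Z - 1 = k by rewrite -addn1 PoszD addrK.
rewrite !dpow_nat -scalerAr (skew_powE v_neq0 v2_neq1 y_x Z_x) -!qintE.
by rewrite scalerDr !scalerA qfactVS -exprnP -!scalerAl scalerA [v ^+ k.+1 * _]mulrC.
Qed.

Section QueerRelations.
Variables (n : nat) (A : algType Qv) (Kp Km Kb E F Eb Fb : nat -> A).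
Hypothesis rels : qq_rels n Kp Km Kb E F Eb Fb.
Variable i : nat.
Hypothesis i_range : (1 <= i <= n.-1)%N.

Let i_le_n : (1 <= i <= n)%N. Proof. lia. Qed.
Let Si_le_n : (2 <= i.+1 <= n)%N. Proof. lia. Qed.
Let Si_range : (1 <= i.+1 <= n)%N. Proof. lia. Qed.

Let Kp_Km_inv j : (1 <= j <= n)%N -> Kp j * Km j = 1 /\ Km j * Kp j = 1.
Proof. by move=> hj; case: rels => QQ1 _; case: (QQ1 j j hj hj). Qed.

Let Kp_Kb_comm j k : (1 <= j <= n)%N -> (1 <= k <= n)%N -> Kp j * Kb k = Kb k * Kp j.
Proof. by move=> hj hk; case: rels => QQ1 _; case: (QQ1 j k hj hk). Qed.

Let Kp_Kp_comm j k : (1 <= j <= n)%N -> (1 <= k <= n)%N -> Kp j * Kp k = Kp k * Kp j.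
Proof. by move=> hj hk; case: rels => QQ1 _; case: (QQ1 j k hj hk). Qed.

Let Kp_qcomm :
  [/\ qcomm v (Kp i) (E i), qcomm v^-1 (Kp i) (F i) & qcomm v^-1 (Kp i) (Fb i)].
Proof.
case: rels => _ [QQ2 _]; have := QQ2 i i i_le_n i_range.
have -> : epsal i i = 1 by rewrite /epsal eqxx (ltn_eqF (ltnSn i)).
by rewrite expr1z exprN1 => -[? _ ? ?].
Qed.

Let Kp_Si_qcomm :
  [/\ qcomm v^-1 (Kp i.+1) (E i), qcomm v^-1 (Kp i.+1) (Eb i),
      qcomm v (Kp i.+1) (F i) & qcomm v (Kp i.+1) (Fb i)].
Proof.
case: rels => _ [QQ2 _]; have := QQ2 i.+1 i Si_range i_range.
have -> : epsal i.+1 i = -1 by rewrite /epsal eqxx (gtn_eqF (ltnSn i)).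
by rewrite opprK expr1z exprN1.
Qed.

Let Kb_E : Kb i * E i = v *: (E i * Kb i) + Eb i * Km i.
Proof.
case: rels => _ [_ [QQ3 _]]; case: (QQ3 i i_range) => + _ _ _.
by move/eqP; rewrite subr_eq addrC => /eqP.
Qed.

Let Kb_F : Kb i * F i = v *: (F i * Kb i) - Fb i * Kp i.
Proof.
case: rels => _ [_ [QQ3 _]]; case: (QQ3 i i_range) => _ + _ _.
by move/eqP; rewrite subr_eq addrC => /eqP.
Qed.

Let Kb_Si_E : Kb i.+1 * E i = v^-1 *: (E i * Kb i.+1 - Km i.+1 * Eb i).
Proof.
case: rels => _ [_ [_ [QQ3 _]]]; case: (QQ3 i.+1 Si_le_n) => /= + _ _ _.
by move=> h; rewrite -[LHS](scalerK v_neq0) -h addrC subrK.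
Qed.

Let Kb_Si_F : Kb i.+1 * F i = v^-1 *: (F i * Kb i.+1 + Kp i.+1 * Fb i).
Proof.
case: rels => _ [_ [_ [QQ3 _]]]; case: (QQ3 i.+1 Si_le_n) => /= _ + _ _.
by move=> h; rewrite -[LHS](scalerK v_neq0) -h addrC subrK.
Qed.

Let E_Fb : E i * Fb i - Fb i * E i = Km i.+1 * Kb i - Kb i.+1 * Km i.
Proof.
by case: rels => _ [_ [_ [_ [_ [QQ4 _]]]]]; case: (QQ4 i i i_range i_range); rewrite eqxx.
Qed.

Let Eb_F : Eb i * F i - F i * Eb i = Kp i.+1 * Kb i - Kb i.+1 * Kp i.
Proof.
by case: rels => _ [_ [_ [_ [_ [QQ4 _]]]]]; case: (QQ4 i i i_range i_range); rewrite eqxx.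
Qed.

Let bar_comm : qcomm 1 (Eb i) (E i) /\ qcomm 1 (Fb i) (F i).
Proof.
case: rels => _ [_ [_ [_ [_ [_ [_ [QQ5 _]]]]]]]; rewrite !qcomm_comm.
have := QQ5 i i i_range i_range; rewrite (ltn_eqF (ltnSn i)).
by case=> // -> ->.
Qed.

Lemma Ebar_F : Eb i * F i = F i * Eb i + (Kb i * Kp i.+1 - Kp i * Kb i.+1).
Proof.
rewrite -(Kp_Kb_comm Si_range i_le_n) (Kp_Kb_comm i_le_n Si_range) -Eb_F.
by rewrite addrC subrK.
Qed.

Let KpKp_Fb_comm : Fb i * Kp i * Kp i.+1 = Kp i * Kp i.+1 * Fb i.
Proof.
have [_ _ PFb] := Kp_qcomm; have [_ _ _ P1Fb] := Kp_Si_qcomm.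
have := qcommMl PFb P1Fb; rewrite (mulVf v_neq0) => /qcomm_comm ->.
by rewrite mulrA.
Qed.

Lemma KbKp_F : Kb i * Kp i.+1 * F i =
  v ^+ 2 *: (F i * (Kb i * Kp i.+1)) + v *: - (Kp i * Kp i.+1 * Fb i).
Proof.
have [_ _ P1F _] := Kp_Si_qcomm.
rewrite -mulrA P1F -scalerAr [Kb i * (F i * _)]mulrA Kb_F; expand_lin A.
by rewrite KpKp_Fb_comm expr2.
Qed.

Lemma KpKb_F : Kp i * Kb i.+1 * F i =
  v ^- 2 *: (F i * (Kp i * Kb i.+1)) - v^-1 *: - (Kp i * Kp i.+1 * Fb i).
Proof.
have [_ PF _] := Kp_qcomm.
rewrite -mulrA Kb_Si_F; expand_lin A; rewrite PF; expand_lin A.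
by rewrite expr2 invfM.
Qed.

Lemma KpKpFb_F : - (Kp i * Kp i.+1 * Fb i) * F i = F i * - (Kp i * Kp i.+1 * Fb i).
Proof.
have [_ PF _] := Kp_qcomm; have [_ _ P1F _] := Kp_Si_qcomm; have [_ FbF] := bar_comm.
have := qcommMl (qcommMl PF P1F) FbF; rewrite (mulVf v_neq0) mulr1 => /qcomm_comm.
by rewrite mulNr mulrN => ->.
Qed.

Lemma Ebar_dpowF (m : nat) :
  Eb i * dpow (F i) m =
    dpow (F i) m * Eb i
    - v ^ (1 - m%:Z) *: (dpow (F i) (m%:Z - 1) * Kp i * Kb i.+1)
    + v ^ (m%:Z - 1) *: (dpow (F i) (m%:Z - 1) * Kb i * Kp i.+1)
    - dpow (F i) (m%:Z - 2) * Kp i * Kp i.+1 * Fb i.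
Proof.
rewrite (mul_dpow_commutator KbKp_F KpKb_F KpKpFb_F Ebar_F) mulrN !mulrA.
by rewrite !addrA (addrAC (dpow (F i) m * Eb i)).
Qed.

Let Km_qcomm :
  [/\ qcomm v^-1 (Km i) (E i), qcomm v (Km i.+1) (E i) & qcomm v (Km i.+1) (Eb i)].
Proof.
have [PM MP] := Kp_Km_inv i_le_n; have [P1M1 M1P1] := Kp_Km_inv Si_range.
have [PE _ _] := Kp_qcomm; have [P1E P1Eb _ _] := Kp_Si_qcomm.
have vV_neq0 : v^-1 != 0 by rewrite invr_eq0 v_neq0.
split; first exact: qcommV PM MP v_neq0 PE.
  by rewrite -[v]invrK; apply: qcommV P1M1 M1P1 vV_neq0 P1E.
by rewrite -[v]invrK; apply: qcommV P1M1 M1P1 vV_neq0 P1Eb.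
Qed.

Let Km_comm : Km i.+1 * Kb i = Kb i * Km i.+1 /\ Km i.+1 * Km i = Km i * Km i.+1.
Proof.
have [PM MP] := Kp_Km_inv i_le_n; have [P1M1 M1P1] := Kp_Km_inv Si_range.
split; first exact: comm_invl P1M1 M1P1 (Kp_Kb_comm Si_range i_le_n).
apply: comm_invl P1M1 M1P1 _; apply/esym/(comm_invl PM MP).
exact: Kp_Kp_comm.
Qed.

Lemma E_Fbar : E i * Fb i = Fb i * E i + (Kb i * Km i.+1 - Kb i.+1 * Km i).
Proof. by case: Km_comm => M1B _; rewrite -M1B -E_Fb addrC subrK. Qed.

Lemma KbKm_E : Kb i * Km i.+1 * E i =
  v ^+ 2 *: (E i * (Kb i * Km i.+1)) + v *: (Eb i * Km i.+1 * Km i).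
Proof.
have [_ M1E _] := Km_qcomm; have [_ M1M] := Km_comm.
rewrite -mulrA M1E -scalerAr [Kb i * (E i * _)]mulrA Kb_E; expand_lin A.
by rewrite -[Eb i * Km i * _]mulrA -M1M mulrA expr2.
Qed.

Lemma KbKm_Si_E : Kb i.+1 * Km i * E i =
  v ^- 2 *: (E i * (Kb i.+1 * Km i)) - v^-1 *: (Eb i * Km i.+1 * Km i).
Proof.
have [ME _ M1Eb] := Km_qcomm.
rewrite -mulrA ME -scalerAr [Kb i.+1 * (E i * _)]mulrA Kb_Si_E; expand_lin A.
by rewrite M1Eb; expand_lin A; rewrite (divfK v_neq0) -invfM -expr2.
Qed.

Lemma EbKmKm_E : Eb i * Km i.+1 * Km i * E i = E i * (Eb i * Km i.+1 * Km i).
Proof.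
have [ME M1E _] := Km_qcomm; have [EbE _] := bar_comm.
have := qcommMl (qcommMl EbE M1E) ME; rewrite mul1r (mulfV v_neq0).
by move/qcomm_comm.
Qed.

Lemma dpowE_Fbar (m : nat) :
  dpow (E i) m * Fb i =
    Fb i * dpow (E i) m
    + v ^ (m%:Z - 1) *: (dpow (E i) (m%:Z - 1) * Kb i * Km i.+1)
    - v ^ (- m%:Z + 1) *: (dpow (E i) (m%:Z - 1) * Kb i.+1 * Km i)
    + dpow (E i) (m%:Z - 2) * Eb i * Km i.+1 * Km i.
Proof.
rewrite (dpow_mul_commutator KbKm_E KbKm_Si_E EbKmKm_E E_Fbar) !mulrA.
by rewrite [- m%:Z + 1]addrC !addrA.
Qed.

Lemma Ebar_dpowE_succ (m : nat) : (i <= n.-2)%N ->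
  Eb i * dpow (E i.+1) m =
    v ^ m%:Z *: (dpow (E i.+1) m * Eb i)
    + dpow (E i.+1) (m%:Z - 1) * (E i * Eb i.+1 - v *: (Eb i.+1 * E i)).
Proof.
move=> i_le; have Si_range' : (1 <= i.+1 <= n.-1)%N by lia.
have [i_gt0 Si_le] : (1 <= i)%N /\ (i.+1 <= n.-1)%N by lia.
case: rels => _ [_ [_ [_ [_ [_ [_ [_ [_ [QQ5 QQ6]]]]]]]]].
have [_ Z_E _ _] := QQ5 i i_gt0 Si_le.
have := QQ6 i.+1 i Si_range' i_range; rewrite eqxx => /(_ isT) [serre _].
apply: mul_dpow_skew; rewrite Z_E; first by rewrite addrC subrK.
exact: serre_qcomm v_neq0 (serre _ (or_intror erefl)).
Qed.

End QueerRelations.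

Theorem lemma5p1 (n i m : nat) (A : algType Qv)
  (Kp Km Kb E F Eb Fb : nat -> A) :
  qq_rels n Kp Km Kb E F Eb Fb ->
  (1 <= i <= n.-1)%N -> (1 <= m)%N ->
  [/\ Eb i * dpow (F i) m =
        dpow (F i) m * Eb i
        - v ^ (1 - m%:Z) *: (dpow (F i) (m%:Z - 1) * Kp i * Kb i.+1)
        + v ^ (m%:Z - 1) *: (dpow (F i) (m%:Z - 1) * Kb i * Kp i.+1)
        - dpow (F i) (m%:Z - 2) * Kp i * Kp i.+1 * Fb i,
      dpow (E i) m * Fb i =
        Fb i * dpow (E i) m
        + v ^ (m%:Z - 1) *: (dpow (E i) (m%:Z - 1) * Kb i * Km i.+1)
        - v ^ (- m%:Z + 1) *: (dpow (E i) (m%:Z - 1) * Kb i.+1 * Km i)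
        + dpow (E i) (m%:Z - 2) * Eb i * Km i.+1 * Km i &
      (i <= n.-2)%N ->
      Eb i * dpow (E i.+1) m =
        v ^ m%:Z *: (dpow (E i.+1) m * Eb i)
        + dpow (E i.+1) (m%:Z - 1) * (E i * Eb i.+1 - v *: (Eb i.+1 * E i))].
Proof.
(* The identities hold for m = 0 as well. *)
move=> rels i_range _.
split; [exact: (Ebar_dpowF rels i_range m) | exact: (dpowE_Fbar rels i_range m) |
        exact: (Ebar_dpowE_succ rels i_range m)].
Qed.
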